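(* Let $N$ be a positive integer, $C=N+1$, and $0<\eta\le\frac{1}{270C}$. Let $b_1,b_2\in\mathbb{R}^A$ and $a_0\in\Delta_A$ with all coordinates positive, and define $$a_1=\arg\min_{a\in\Delta_A}F_1(a),\ F_1(a)=\langle a,b_1\rangle+D_\psi(a,a_0);\qquad a_2=\arg\min_{a\in\Delta_A}F_2(a),\ F_2(a)=\langle a,b_2\rangle+D_\psi(a,a_0).$$ If $\|b_1-b_2\|_{\nabla^{-2}\psi(a_1)}\le 12\sqrt\eta\,C$, then for all $i\in\{1,\dots,A\}$, $|a_{2,i}-a_{1,i}|\le 60\,\eta\,C\,a_{1,i}$.
   Context: $\Delta_A$ is the probability simplex in $\mathbb{R}^A$. $\psi(x)=\frac1\eta\sum_{i=1}^A\log\frac{1}{x_i}$ for $x$ with positive coordinates, $D_\psi(x,x')=\psi(x)-\psi(x')-\langle\nabla\psi(x'),x-x'\rangle$. $\nabla^2\psi(x)$ is the diagonal matrix with entries $\frac{1}{\eta x_i^2}$ and $\nabla^{-2}\psi(x)$ its inverse (diagonal entries $\eta x_i^2$). For a positive semidefinite matrix $M$, $\|v\|_M=\sqrt{v^\top Mv}$. *)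

From HB Require Import structures.
From mathcomp Require Import all_boot all_order all_algebra.
From mathcomp Require Import all_classical all_reals all_analysis.
Set Implicit Arguments. Unset Strict Implicit. Unset Printing Implicit Defensive.
Import Order.TTheory GRing.Theory Num.Theory.
Local Open Scope ring_scope.

Section Defs.
Variables (R : realType) (A : nat).

Definition in_simplex (x : 'I_A -> R) : Prop :=
  (forall i, 0 <= x i) /\ \sum_(i < A) x i = 1.

Definition pos_coords (x : 'I_A -> R) : Prop := forall i, 0 < x i.

Definition psi (eta : R) (x : 'I_A -> R) : R :=
  eta^-1 * \sum_(i < A) ln ((x i)^-1).

Definition grad_psi (eta : R) (x : 'I_A -> R) (i : 'I_A) : R :=
  - (eta * x i)^-1.

Definition breg (eta : R) (x x' : 'I_A -> R) : R :=
  psi eta x - psi eta x' - \sum_(i < A) grad_psi eta x' i * (x i - x' i).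

Definition Fobj (eta : R) (b a0 a : 'I_A -> R) : R :=
  \sum_(i < A) a i * b i + breg eta a a0.

(* a is the argmin of F over Delta_A (on the domain of psi: positive coords) *)
Definition is_argmin (eta : R) (b a0 a : 'I_A -> R) : Prop :=
  in_simplex a /\ pos_coords a /\
  forall a', in_simplex a' -> pos_coords a' -> Fobj eta b a0 a <= Fobj eta b a0 a'.

(* ||v||_{nabla^{-2} psi(x)}, the matrix being diag(eta x_i^2) *)
Definition local_norm_inv_hess (eta : R) (x v : 'I_A -> R) : R :=
  Num.sqrt (\sum_(i < A) v i * (eta * x i ^+ 2) * v i).

End Defs.

(** At an interior minimiser [a] of [<a, b> + D_psi(a, a0)] over the simplex the
    gradient [b + grad psi(a) - grad psi(a0)] has equal coordinates (perturb [a]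
    along [e_j - e_k]).  Subtracting these conditions for [a1] and [a2] and scaling
    by [eta a1_k] gives [e_k := a1_k / a2_k - 1 = t a1_k - s_k] for a scalar [t]
    and [s_k = eta a1_k (b1_k - b2_k)], while [sum_k (a1_k - a2_k) = 0] becomes
    [sum_k a1_k e_k / (1 + e_k) = 0].  The hypothesis on [b1 - b2] says
    [|s|_2 <= d := 12 eta C].  As [e / (1 + e)] is increasing, at most [e], and at
    least [e - 2 e^2] for [e >= -1/2], this balance equation pins [t |a1|_2] to
    [[-d, 2d]], so [|e_k| <= 3d] and [a2_k = a1_k / (1 + e_k)] is close to [a1_k]. *)

From HB Require Import structures.
From mathcomp Require Import all_boot all_order all_algebra.
From mathcomp Require Import all_classical all_reals all_analysis.
From mathcomp Require Import ring lra.

Set Implicit Arguments.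
Unset Strict Implicit.
Unset Printing Implicit Defensive.

Import Order.TTheory GRing.Theory Num.Theory.
Local Open Scope ring_scope.

Section RealField.
Variable R : realFieldType.

Lemma ler_div1D (a b : R) : 0 < 1 + a -> a <= b -> a / (1 + a) <= b / (1 + b).
Proof.
move=> a_gt0 a_le_b; rewrite ler_pdivrMr; last lra.
by rewrite mulrAC ler_pdivlMr //; nra.
Qed.

Lemma div1D_le (e : R) : 0 < 1 + e -> e / (1 + e) <= e.
Proof. by move=> e_gt; rewrite ler_pdivrMr //; have := sqr_ge0 e; nra. Qed.

Lemma div1D_ge (e : R) : - 1 / 2 <= e -> e - 2 * e ^+ 2 <= e / (1 + e).
Proof. by move=> e_ge; rewrite ler_pdivlMr; [have := sqr_ge0 e; nra | lra]. Qed.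

Lemma eq0_of_quadratic_ge0 (tau G K : R) : 0 < tau -> 0 <= K ->
  (forall t, - tau <= t <= tau -> 0 <= t * G + t ^+ 2 * K) -> G = 0.
Proof.
move=> tau_gt0 K_ge0 quad_ge0; apply/eqP/negPn/negP => G_neq0.
have G_gt0 : 0 < `|G| by rewrite normr_gt0.
(* This [t] lies in [(0, tau]] and has [t * K < |G|], whereas the hypothesis
   at [t] and [-t] gives [|G| <= t * K]. *)
pose t := tau * `|G| / (`|G| + tau * K).
have D_gt0 : 0 < `|G| + tau * K by have := mulr_ge0 (ltW tau_gt0) K_ge0; lra.
have t_gt0 : 0 < t by rewrite divr_gt0 ?mulr_gt0.
have t_le : t <= tau.
  rewrite ler_pdivrMr // mulrDr.
  by have := mulr_ge0 (ltW tau_gt0) (mulr_ge0 (ltW tau_gt0) K_ge0); nra.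
have tK_lt : t * K < `|G|.
  rewrite mulrAC ltr_pdivrMr //.
  by have := mulr_ge0 (ltW tau_gt0) (mulr_ge0 (ltW G_gt0) K_ge0); nra.
have /quad_ge0 h1 : - tau <= t <= tau by apply/andP; split; lra.
have /quad_ge0 h2 : - tau <= - t <= tau by apply/andP; split; lra.
have [G_ge0|G_lt0] := lerP 0 G.
  rewrite ger0_norm // in tK_lt; rewrite sqrrN in h2; nra.
rewrite ltr0_norm // in tK_lt; nra.
Qed.

Lemma normrB_le_of_ratio (x y delta : R) :
  0 < y -> delta <= 1 / 3 -> `|x / y - 1| <= delta -> `|y - x| <= 3 / 2 * delta * x.
Proof.
move=> y_gt0 delta_le; set e := x / y - 1.
have x_eq : x = y * (1 + e) by rewrite /e; field; rewrite gt_eqF.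
rewrite x_eq (_ : y - y * (1 + e) = - (y * e)); last by ring.
rewrite normrN normrM (gtr0_norm y_gt0) => e_le.
have delta_ge0 : 0 <= delta := le_trans (normr_ge0 _) e_le.
have e_ge : 0 <= e + 1 / 3.
  by have := ler_norm (- e); rewrite normrN; lra.
have := ler_wpM2l (ltW y_gt0) e_le.
have := mulr_ge0 (mulr_ge0 (ltW y_gt0) delta_ge0) e_ge.
lra.
Qed.

Lemma sum_delta_mul (A : nat) (j : 'I_A) (F : 'I_A -> R) :
  \sum_i (i == j)%:R * F i = F j.
Proof.
rewrite (bigD1 j) //= eqxx mul1r big1 ?addr0 // => i /negPf ->.
by rewrite mul0r.
Qed.

Lemma sum_mul_le_max (A : nat) (x w : 'I_A -> R) (c : R) :
  (forall i, 0 <= w i) -> (forall i, x i <= c) -> \sum_i x i * w i <= c * \sum_i w i.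
Proof.
by move=> w_ge0 x_le; rewrite mulr_sumr; apply: ler_sum => i _; exact: ler_wpM2r.
Qed.

Lemma sum_mul_sqr_le (A : nat) (x y : 'I_A -> R) :
  (\sum_i x i * y i) ^+ 2 <= (\sum_i x i ^+ 2) * (\sum_i y i ^+ 2).
Proof.
pose T i j := x i ^+ 2 * y j ^+ 2 - (x i * y i) * (x j * y j).
have gap : (\sum_i x i ^+ 2) * (\sum_i y i ^+ 2) - (\sum_i x i * y i) ^+ 2
    = \sum_i \sum_j T i j.
  rewrite expr2 !mulr_suml -sumrB; apply: eq_bigr => i _.
  by rewrite !mulr_sumr -sumrB.
have lagrange : \sum_i \sum_j (x i * y j - x j * y i) ^+ 2 = 2 * \sum_i \sum_j T i j.
  transitivity (\sum_i \sum_j (T i j + T j i)).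
    by apply: eq_bigr => i _; apply: eq_bigr => j _; rewrite /T; ring.
  under eq_bigr do rewrite big_split /=.
  by rewrite big_split /= [X in _ + X]exchange_big /= mulr2n mulrDl mul1r.
rewrite -subr_ge0 gap -(@pmulr_rge0 _ 2) // -lagrange.
by do 2![apply: sumr_ge0 => ? _]; exact: sqr_ge0.
Qed.

End RealField.

Section RealClosedField.
Variable R : rcfType.

Lemma normr_le_sqrt_sum_sqr (A : nat) (x : 'I_A -> R) j :
  `|x j| <= Num.sqrt (\sum_i x i ^+ 2).
Proof.
rewrite -sqrtr_sqr ler_wsqrtr // (bigD1 j) //= lerDl.
by apply: sumr_ge0 => i _; exact: sqr_ge0.
Qed.

Lemma normr_sum_mul_le (A : nat) (x y : 'I_A -> R) :
  `|\sum_i x i * y i| <= Num.sqrt (\sum_i x i ^+ 2) * Num.sqrt (\sum_i y i ^+ 2).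
Proof.
rewrite -sqrtrM ?sumr_ge0 // => [|i _]; last exact: sqr_ge0.
by rewrite -sqrtr_sqr ler_wsqrtr // sum_mul_sqr_le.
Qed.

End RealClosedField.

Lemma ln_invB_le (R : realType) (a a' : R) : 0 < a -> a / 2 <= a' ->
  ln a'^-1 - ln a^-1 <= - (a' - a) / a + 2 * ((a' - a) ^+ 2 / a ^+ 2).
Proof.
move=> a_gt0 half_le; have a'_gt0 : 0 < a' by lra.
rewrite !lnV ?posrE // opprK addrC -ln_div ?posrE //.
have -> : a / a' = 1 + (a / a' - 1) by ring.
apply: le_trans (le_ln1Dx _) _; first by have := divr_gt0 a_gt0 a'_gt0; lra.
rewrite -subr_le0.
have -> : a / a' - 1 - (- (a' - a) / a + 2 * ((a' - a) ^+ 2 / a ^+ 2))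
    = (a' - a) ^+ 2 * (a - 2 * a') / (a ^+ 2 * a').
  by field; rewrite !gt_eqF.
rewrite ler_pdivrMr ?mulr_gt0 ?exprn_gt0 // mul0r.
by apply: mulr_ge0_le0; [exact: sqr_ge0 | lra].
Qed.

Section Stability.
Variables (R : rcfType) (A : nat) (x s e : 'I_A -> R) (t d : R).
Hypotheses (x_gt0 : forall i, 0 < x i) (d_gt0 : 0 < d) (d_small : 20 * d < 1).
Hypothesis sum_s2_le : \sum_i s i ^+ 2 <= d ^+ 2.
Hypothesis e_def : forall i, e i = t * x i - s i.
Hypothesis De_gt0 : forall i, 0 < 1 + e i.
Hypothesis balance : \sum_i x i * (e i / (1 + e i)) = 0.

Let Q := \sum_i x i ^+ 2.
Let q : R := Num.sqrt Q.

Let q_ge0 : 0 <= q. Proof. exact: sqrtr_ge0. Qed.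

Let sqr_q : q ^+ 2 = Q.
Proof. by rewrite sqr_sqrtr // sumr_ge0 // => i _; exact: sqr_ge0. Qed.

Let q_gt0_of_tq : t * q != 0 -> 0 < q.
Proof.
move=> tq_neq0; rewrite lt_def q_ge0 andbT.
by apply: contraNneq tq_neq0 => ->; rewrite mulr0.
Qed.

Let x_le_q i : x i <= q.
Proof. exact: le_trans (ler_norm _) (normr_le_sqrt_sum_sqr _ _). Qed.

Let sqrt_sum_s2_le : Num.sqrt (\sum_i s i ^+ 2) <= d.
Proof. by rewrite -(ger0_norm (ltW d_gt0)) -sqrtr_sqr ler_wsqrtr. Qed.

Let s_le i : `|s i| <= d.
Proof. exact: le_trans (normr_le_sqrt_sum_sqr _ _) sqrt_sum_s2_le. Qed.

Let sum_xs_le : `|\sum_i x i * s i| <= q * d.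
Proof. exact: le_trans (normr_sum_mul_le _ _) (ler_wpM2l q_ge0 sqrt_sum_s2_le). Qed.

Let stability_lower : - d <= t * q.
Proof.
rewrite leNgt; apply/negP => tq_lt.
have q_pos : 0 < q by apply: q_gt0_of_tq; rewrite lt_eqF // (lt_trans tq_lt) // oppr_lt0.
have : 0 <= t * Q - \sum_i x i * s i.
  rewrite /Q mulr_sumr -sumrB -[leLHS]balance; apply: ler_sum => i _.
  rewrite (_ : _ - _ = x i * e i); last by rewrite e_def; ring.
  by rewrite ler_wpM2l ?div1D_le // ltW.
have neg : t * Q + q * d < 0.
  have -> : t * Q + q * d = (t * q + d) * q by rewrite -sqr_q; ring.
  by rewrite pmulr_llt0 //; lra.
have := ler_norm (- \sum_i x i * s i); rewrite normrN => /le_trans/(_ sum_xs_le).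
lra.
Qed.

Let stability_upper : t * q <= 2 * d.
Proof.
rewrite leNgt; apply/negP => tq_gt.
have q_pos : 0 < q.
  by apply: q_gt0_of_tq; rewrite gt_eqF // (lt_trans _ tq_gt) // mulr_gt0.
pose t0 := 2 * d / q.
have t0q : t0 * q = 2 * d by rewrite divfK // gt_eqF.
have t0_ge0 : 0 <= t0 by rewrite divr_ge0 // ?mulr_ge0 // ltW.
have t0_le : t0 <= t by rewrite -(ler_pM2r q_pos) t0q ltW.
pose u i := t0 * x i - s i.
have lower_model : \sum_i x i * (u i - 2 * u i ^+ 2) <= 0.
  rewrite -[leRHS]balance; apply: ler_sum => i _; rewrite ler_wpM2l ?(ltW (x_gt0 i)) //.
  have u_le : u i <= e i by rewrite e_def lerD2r ler_wpM2r // ltW.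
  have u_ge : - 1 / 2 <= u i.
    have := mulr_ge0 t0_ge0 (ltW (x_gt0 i)); have := ler_norm (s i).
    rewrite /u; have := s_le i; move: d_small; lra.
  apply: le_trans (div1D_ge u_ge) (ler_div1D _ u_le); have := De_gt0 i; lra.
have model_ge : t0 * Q - \sum_i x i * s i - 4 * t0 ^+ 2 * \sum_i x i * x i ^+ 2
                - 4 * \sum_i x i * s i ^+ 2 <= \sum_i x i * (u i - 2 * u i ^+ 2).
  rewrite /Q !mulr_sumr -!sumrB; apply: ler_sum => i _; rewrite /u.
  have := mulr_ge0 (ltW (x_gt0 i)) (sqr_ge0 (t0 * x i + s i)); nra.
have t0Q : t0 * Q = 2 * (d * q) by rewrite -sqr_q expr2 mulrA t0q mulrA.
have sum_x3_le : t0 ^+ 2 * \sum_i x i * x i ^+ 2 <= 4 * (d ^+ 2 * q).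
  have := sum_mul_le_max (fun i => sqr_ge0 (x i)) x_le_q.
  move=> /(ler_wpM2l (sqr_ge0 t0)) /le_trans; apply.
  rewrite -/Q -sqr_q (_ : _ * (q * _) = (t0 * q) ^+ 2 * q); last by ring.
  by rewrite t0q; lra.
have sum_xs2_le : \sum_i x i * s i ^+ 2 <= d ^+ 2 * q.
  apply: le_trans (sum_mul_le_max (fun i => sqr_ge0 (s i)) x_le_q) _.
  by rewrite mulrC ler_wpM2r.
have sum_xs_le' : \sum_i x i * s i <= d * q.
  by rewrite mulrC; exact: le_trans (ler_norm _) sum_xs_le.
have : 0 < d * q * (1 - 20 * d) by rewrite !mulr_gt0 //; move: d_small; lra.
lra.
Qed.

Lemma stability i : `|e i| <= 3 * d.
Proof.
have tq_le : `|t| * q <= 2 * d.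
  rewrite -(ger0_norm q_ge0) -normrM ler_norml stability_upper andbT.
  by move: d_gt0 stability_lower; lra.
rewrite e_def; apply: le_trans (ler_normB _ _) _.
rewrite normrM (gtr0_norm (x_gt0 i)).
have := ler_wpM2l (normr_ge0 t) (x_le_q i); have := s_le i; lra.
Qed.

End Stability.

Section FirstOrder.
Variables (R : realType) (A : nat) (eta : R) (b a0 : 'I_A -> R).

Definition grad_Fobj (a : 'I_A -> R) (i : 'I_A) : R :=
  b i + grad_psi eta a i - grad_psi eta a0 i.

Lemma FobjB (a a' : 'I_A -> R) :
  Fobj eta b a0 a' - Fobj eta b a0 a =
  \sum_i ((a' i - a i) * (b i - grad_psi eta a0 i)
          + eta^-1 * (ln (a' i)^-1 - ln (a i)^-1)).
Proof.
rewrite /Fobj /breg /psi !mulr_sumr -!sumrB -!big_split /= -sumrB.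
by apply: eq_bigr => i _; ring.
Qed.

Hypothesis eta_gt0 : 0 < eta.

Lemma FobjB_le (a a' : 'I_A -> R) : pos_coords a -> (forall i, a i / 2 <= a' i) ->
  Fobj eta b a0 a' - Fobj eta b a0 a <=
  \sum_i (a' i - a i) * grad_Fobj a i + 2 / eta * \sum_i (a' i - a i) ^+ 2 / a i ^+ 2.
Proof.
move=> a_gt0 half_le; rewrite FobjB mulr_sumr -big_split /=; apply: ler_sum => i _.
have -> : (a' i - a i) * grad_Fobj a i + 2 / eta * ((a' i - a i) ^+ 2 / a i ^+ 2) =
    (a' i - a i) * (b i - grad_psi eta a0 i) +
    eta^-1 * (- (a' i - a i) / a i + 2 * ((a' i - a i) ^+ 2 / a i ^+ 2)).
  by rewrite /grad_Fobj {1}/grad_psi invfM; ring.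
rewrite lerD2l; apply: ler_wpM2l; first by rewrite invr_ge0 ltW.
exact: ln_invB_le.
Qed.

Lemma argmin_grad_eq (a : 'I_A -> R) j k :
  is_argmin eta b a0 a -> grad_Fobj a j = grad_Fobj a k.
Proof.
move=> [[_ a_sum] [a_gt0 a_min]]; have [->|neq_jk] := eqVneq j k; first by [].
pose v i : R := (i == j)%:R - (i == k)%:R.
have sum_v (F : 'I_A -> R) : \sum_i v i * F i = F j - F k.
  by under eq_bigr do rewrite mulrBl; rewrite sumrB !sum_delta_mul.
have sum_v0 : \sum_i v i = 0.
  rewrite -[RHS](subrr (1 : R)) -(sum_v (fun=> 1)).
  by apply: eq_bigr => i _; rewrite mulr1.
pose m := Num.min (a j) (a k).
have m_le_j : m <= a j by rewrite ge_min lexx.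
have m_le_k : m <= a k by rewrite ge_min lexx orbT.
have m_gt0 : 0 < m by rewrite lt_min !a_gt0.
pose K := 2 / eta * \sum_i v i ^+ 2 / a i ^+ 2.
have K_ge0 : 0 <= K.
  apply: mulr_ge0; first by rewrite divr_ge0 // ltW.
  by apply: sumr_ge0 => i _; rewrite divr_ge0 // sqr_ge0.
apply/eqP; rewrite -subr_eq0; apply/eqP.
apply: (eq0_of_quadratic_ge0 (tau := m / 2) (K := K)) => // [|t /andP[t_ge t_le]].
  by rewrite divr_gt0.
pose a' i := a i + t * v i.
have half_le i : a i / 2 <= a' i.
  have := a_gt0 i; rewrite /a' /v.
  have [->|nij] := eqVneq i j; first by rewrite (negPf neq_jk) mulr1n mulr0n; lra.
  have [->|nik] := eqVneq i k; first by rewrite mulr1n mulr0n; lra.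
  by rewrite !mulr0n; lra.
have a'_gt0 : pos_coords a' by move=> i; have := half_le i; have := a_gt0 i; lra.
have a'_simplex : in_simplex a'.
  split=> [i|]; first exact: ltW.
  by rewrite big_split /= a_sum -mulr_sumr sum_v0 mulr0 addr0.
have := a_min a' a'_simplex a'_gt0; rewrite -subr_ge0 => /le_trans; apply.
apply: le_trans (FobjB_le a_gt0 half_le) _.
have da i : a' i - a i = t * v i by rewrite /a'; ring.
rewrite (eq_bigr (fun i => t * (v i * grad_Fobj a i))); last first.
  by move=> i _; rewrite da; ring.
rewrite [X in _ + _ * X <= _](eq_bigr (fun i => t ^+ 2 * (v i ^+ 2 / a i ^+ 2)));
  last by move=> i _; rewrite da; ring.
by rewrite -!mulr_sumr sum_v /K [2 / eta * (_ * _)]mulrCA.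
Qed.

End FirstOrder.

Section Argmins.
Variables (R : realType) (A : nat).

Lemma argmin_ratio (eta : R) (b1 b2 a0 a1 a2 : 'I_A -> R) i k :
  0 < eta -> is_argmin eta b1 a0 a1 -> is_argmin eta b2 a0 a2 ->
  a1 k / a2 k - 1 =
  eta * (grad_Fobj eta b1 a0 a1 i - grad_Fobj eta b2 a0 a2 i) * a1 k
  - eta * a1 k * (b1 k - b2 k).
Proof.
move=> eta_gt0 argmin1 argmin2.
have a1_gt0 := argmin1.2.1 k; have a2_gt0 := argmin2.2.1 k.
rewrite -(argmin_grad_eq eta_gt0 k i argmin1) -(argmin_grad_eq eta_gt0 k i argmin2).
rewrite /grad_Fobj [grad_psi _ a1 _]/grad_psi [grad_psi _ a2 _]/grad_psi.
by field; rewrite !gt_eqF.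
Qed.

Lemma sum_ratio_balance (x y : 'I_A -> R) :
  in_simplex x -> in_simplex y -> pos_coords x -> pos_coords y ->
  \sum_i x i * ((x i / y i - 1) / (1 + (x i / y i - 1))) = 0.
Proof.
move=> [_ x_sum] [_ y_sum] x_gt0 y_gt0.
transitivity (\sum_i (x i - y i)); last by rewrite sumrB x_sum y_sum subrr.
by apply: eq_bigr => i _; rewrite (addrC 1) subrK; field; rewrite !gt_eqF ?x_gt0 ?y_gt0.
Qed.

Lemma sum_sqr_le_local_norm (eta r : R) (x v : 'I_A -> R) :
  0 < eta -> 0 <= r -> local_norm_inv_hess eta x v <= r * Num.sqrt eta ->
  \sum_i (eta * x i * v i) ^+ 2 <= (r * eta) ^+ 2.
Proof.
move=> eta_gt0 r_ge0; rewrite /local_norm_inv_hess.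
set S := \sum_i _ => norm_le.
have S_ge0 : 0 <= S.
  apply: sumr_ge0 => i _; rewrite (_ : _ * _ = eta * (x i * v i) ^+ 2); last by ring.
  by rewrite mulr_ge0 ?sqr_ge0 // ltW.
have -> : \sum_i (eta * x i * v i) ^+ 2 = eta * S.
  by rewrite mulr_sumr; apply: eq_bigr => i _; ring.
have : S <= r ^+ 2 * eta.
  rewrite -(sqr_sqrtr S_ge0) -(sqr_sqrtr (ltW eta_gt0)) -exprMn.
  by rewrite ler_sqr ?nnegrE ?mulr_ge0 ?sqrtr_ge0.
move=> S_le; rewrite (_ : (r * eta) ^+ 2 = eta * (r ^+ 2 * eta)); last by ring.
by apply: ler_wpM2l S_le; exact: ltW.
Qed.

End Argmins.

Theorem mainTheorem7 (R : realType) (A N : nat) (eta : R)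
  (b1 b2 a0 a1 a2 : 'I_A -> R) :
  (0 < N)%N ->
  0 < eta -> eta <= (270 * (N.+1)%:R)^-1 ->
  in_simplex a0 -> pos_coords a0 ->
  is_argmin eta b1 a0 a1 ->
  is_argmin eta b2 a0 a2 ->
  local_norm_inv_hess eta a1 (fun i => b1 i - b2 i)
    <= 12 * Num.sqrt eta * (N.+1)%:R ->
  forall i : 'I_A, `|a2 i - a1 i| <= 60 * eta * (N.+1)%:R * a1 i.
Proof.
(* [a0] only enters through [grad_psi eta a0], which cancels between the two
   optimality conditions. *)
move=> _ eta_gt0 eta_le _ _ argmin1 argmin2 norm_le i.
set C : R := (N.+1)%:R.
have C_gt0 : 0 < C by rewrite ltr0Sn.
have etaC_le : C * eta <= 1 / 270.
  by rewrite mulrC -ler_pdivlMr // mul1r -invfM.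
have [[simplex1 [a1_gt0 _]] [simplex2 [a2_gt0 _]]] := (argmin1, argmin2).
have ratio_le : `|a1 i / a2 i - 1| <= 3 * (12 * C * eta).
  apply: (stability (x := a1) (s := fun k => eta * a1 k * (b1 k - b2 k))
    (t := eta * (grad_Fobj eta b1 a0 a1 i - grad_Fobj eta b2 a0 a2 i))
    (e := fun k => a1 k / a2 k - 1)) => //.
  - by rewrite !mulr_gt0.
  - by lra.
  - by apply: sum_sqr_le_local_norm; rewrite ?mulr_ge0 // -mulrAC.
  - by move=> k; apply: argmin_ratio.
  - by move=> k; rewrite addrC subrK divr_gt0.
  - exact: sum_ratio_balance.
apply: le_trans (normrB_le_of_ratio (a2_gt0 i) _ ratio_le) _; first lra.
have := mulr_ge0 (mulr_ge0 (ltW C_gt0) (ltW eta_gt0)) (ltW (a1_gt0 i)).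
by rewrite -/C; lra.
Qed.
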